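(* Under the setting in the context, assume $\sigma_A=0$ and $S^2\ge M_iR_i/p_i^2$ for all $i$. Choose $\beta_t=0$ for all $t$, $B_t=B_0=1$, $A_0=\frac{3B_0}{S^2p_R^2}$ with $p_R=\min_i p_i/R_i$, and $A_{t+1}=A_t+a_{t+1}$, $\alpha_t=a_{t+1}/A_{t+1}$, where $a_{t+1}>0$ solves $a_{t+1}^2S^2=A_{t+1}B_0$. Then the condition $1-\beta_t-\frac{\alpha_tR_i}{p_i}\ge0$ holds for all $i,t$, and the generalized APCG iterates satisfy $$\mathbb{E}[F(x_t)]-F(\theta^\star)\le\frac{2}{t^2}\Big[S^2r_t^2+\frac{6}{p_R^2}\big[F(x_0)-F(\theta^\star)\big]\Big],$$ with $r_t^2=\|v_0-\theta^\star\|^2_{A^\dagger A}-\mathbb{E}\big[\|v_t-\theta^\star\|^2_{A^\dagger A}\big]$.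
   Context: Setting. Minimize $F(x)=f_A(x)+\sum_{i=1}^d\psi_i(x^{(i)})$ over $\mathbb{R}^d$; $\theta^\star$ a minimizer. $A$ is a matrix with $d$ columns, $A^\dagger$ its pseudo-inverse, $\|u\|^2_{A^\dagger A}=u^TA^\dagger Au$, $e_i$ unit vectors, $x^{(i)}=e_i^Tx$, $R_i=e_i^TA^\dagger Ae_i$ (the minimum defining $p_R$ is over $i$ with $R_i>0$). Each $\psi_i$ is convex; $f_A$ is differentiable with $f_A(x)-f_A(y)\ge\nabla f_A(y)^TA^\dagger A(x-y)+\frac{\sigma_A}{2}(x-y)^TA^\dagger A(x-y)$ for all $x,y$; $\nabla_if_A=e_ie_i^T\nabla f_A$; $f_A$ is $M_i$-smooth in direction $i$; for every $i$ either $R_i=1$ or $\psi_i=0$; sampling probabilities $p_i>0$ sum to $1$. Generalized APCG with $\eta_{i,t}=\frac{a_{t+1}}{B_{t+1}p_i}$: $x_0=v_0=0$; for each $t$: $y_t=\frac{(1-\alpha_t)x_t+\alpha_t(1-\beta_t)v_t}{1-\alpha_t\beta_t}$; sample $i$ w.p. $p_i$ independently; $z_{t+1}=v_{t+1}=(1-\beta_t)v_t+\beta_ty_t-\eta_{i,t}\nabla_if_A(y_t)$; replace $v_{t+1}^{(i)}={\rm prox}_{\eta_{i,t}\psi_i}(z_{t+1}^{(i)})$ where ${\rm prox}_{\eta\psi}(x)=\arg\min_v\frac{1}{2\eta}\|v-x\|^2+\psi(v)$; $x_{t+1}=y_t+\frac{\alpha_tR_i}{p_i}(v_{t+1}-(1-\beta_t)v_t-\beta_ty_t)$.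 *)

From HB Require Import structures.
From mathcomp Require Import all_boot all_order all_algebra.
From mathcomp Require Import all_classical all_reals all_analysis.
Set Implicit Arguments. Unset Strict Implicit. Unset Printing Implicit Defensive.
Import Order.TTheory GRing.Theory Num.Theory.
Import numFieldNormedType.Exports.
Local Open Scope ring_scope.

Section APCG.
Variables (R : realType) (m d : nat).

Definition sqnormP (Ad : 'M[R]_(d, m)) (A : 'M[R]_(m, d)) (u : 'cV[R]_d) : R :=
  (u^T *m (Ad *m A) *m u) 0 0.

Definition Rcoef (Ad : 'M[R]_(d, m)) (A : 'M[R]_(m, d)) (i : 'I_d) : R :=
  (Ad *m A) i i.

(* Ad is the Moore-Penrose pseudo-inverse of A (the four Penrose equations,
   which characterize it uniquely). *)
Definition is_pinv (A : 'M[R]_(m, d)) (Ad : 'M[R]_(d, m)) : Prop :=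
  [/\ A *m Ad *m A = A, Ad *m A *m Ad = Ad,
      (A *m Ad)^T = A *m Ad & (Ad *m A)^T = Ad *m A].

Definition is_pR (Rc p : 'I_d -> R) (pR : R) : Prop :=
  (exists2 i, 0 < Rc i & pR = p i / Rc i) /\
  (forall i, 0 < Rc i -> pR <= p i / Rc i).

Definition convex_fun (psi : R -> R) : Prop :=
  forall (x y l : R), 0 <= l <= 1 ->
    psi (l * x + (1 - l) * y) <= l * psi x + (1 - l) * psi y.

Definition is_prox (psi : R -> R) (eta x w : R) : Prop :=
  forall v : R, 1 / (2 * eta) * (w - x) ^+ 2 + psi w
                <= 1 / (2 * eta) * (v - x) ^+ 2 + psi v.

Definition evec (i : 'I_d) : 'cV[R]_d := delta_mx i 0.

Definition grad_i (grad : 'cV[R]_d -> 'cV[R]_d) (i : 'I_d) (y : 'cV[R]_d) :=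
  delta_mx i i *m grad y.

Definition apcg_step (grad : 'cV[R]_d -> 'cV[R]_d)
    (prox : 'I_d -> R -> R -> R) (Rc p : 'I_d -> R)
    (alpha beta a B : nat -> R) (t : nat) (i : 'I_d)
    (st : 'cV[R]_d * 'cV[R]_d) : 'cV[R]_d * 'cV[R]_d :=
  let x := st.1 in let v := st.2 in
  let y := (1 - alpha t * beta t)^-1 *:
           ((1 - alpha t) *: x + (alpha t * (1 - beta t)) *: v) in
  let eta := a t.+1 / (B t.+1 * p i) in
  let z := (1 - beta t) *: v + beta t *: y - eta *: grad_i grad i y in
  let v' := \col_j (if j == i then prox i eta (z i 0) else z j 0) in
  let x' := y + (alpha t * Rc i / p i) *: (v' - (1 - beta t) *: v - beta t *: y) in
  (x', v').

(* Run the algorithm from x_0 = v_0 = 0 along the sequence s of sampled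
   coordinates (s = [:: i_0; ...; i_{t-1}]); returns (x_t, v_t), t = size s. *)
Definition apcg_run grad prox Rc p alpha beta a B (s : seq 'I_d) :
    'cV[R]_d * 'cV[R]_d :=
  (foldl (fun (kst : nat * ('cV[R]_d * 'cV[R]_d)) i =>
            (kst.1.+1, apcg_step grad prox Rc p alpha beta a B kst.1 i kst.2))
         (0%N, (0, 0)) s).2.

(* Expectation over i_0, ..., i_{t-1} drawn independently with P(i) = p_i. *)
Definition expect (p : 'I_d -> R) (t : nat) (g : seq 'I_d -> R) : R :=
  \sum_(s : t.-tuple 'I_d) (\prod_(i <- s) p i) * g s.

End APCG.

(* Besides the iterates (x_t, v_t), carry an estimate h_t of the separable part
   sum_i psi_i(x_t^(i)): each coordinate of x_t is a convex combination of the
   current v_t^(i) and of older points, and h_t^(i) is the same combination of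
   psi_i-values, so psi_i(x_t^(i)) <= h_t^(i) by convexity.  The Lyapunov function
     A_t (f_A(x_t) + sum_i h_t^(i) - F(theta)) + 1/2 ||v_t - theta||^2_{A^+A}
   does not increase in expectation over the sampled coordinate: coordinate
   smoothness bounds the x-step (its curvature term is absorbed thanks to
   S^2 >= M_i R_i / p_i^2 and a_(t+1)^2 S^2 = A_(t+1)), the prox optimality
   inequality bounds the v-step, and convexity of f_A with respect to A^+A gives
   the three-point estimate.  Finally a_(t+1)^2 S^2 = A_(t+1) makes sqrt(A_t) grow
   linearly, A_t >= t^2/(4 S^2), and A_0 = 3/(S^2 p_R^2) forces alpha_t <= p_R,
   which is the step-size condition. *)

From HB Require Import structures.
From mathcomp Require Import all_boot all_order all_algebra.
From mathcomp Require Import all_classical all_reals all_analysis.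
From mathcomp Require Import ring lra.
Set Implicit Arguments. Unset Strict Implicit. Unset Printing Implicit Defensive.
Import Order.TTheory GRing.Theory Num.Theory.
Import numFieldNormedType.Exports.
Local Open Scope ring_scope.

Lemma sum_tupleS (V : nmodType) (T : finType) (t : nat) (G : t.+1.-tuple T -> V) :
  \sum_(s : t.+1.-tuple T) G s = \sum_(i : T) \sum_(s : t.-tuple T) G [tuple of i :: s].
Proof.
rewrite pair_big /= (reindex (fun ps : T * t.-tuple T => [tuple of ps.1 :: ps.2])) //=.
exists (fun s : t.+1.-tuple T => (thead s, [tuple of behead s])).
  by move=> [i s] _ /=; rewrite theadE; congr pair; apply: val_inj.
by move=> s _ /=; rewrite [RHS]tuple_eta.
Qed.

Section Expectation.
Variables (R : realType) (d : nat) (p : 'I_d -> R).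

Lemma expect0 (g : seq 'I_d -> R) : expect p 0 g = g [::].
Proof.
rewrite /expect (big_pred1 [tuple]) ?big_nil ?mul1r // => s.
by rewrite !inE; apply/esym/eqP/val_inj; case: s => -[].
Qed.

Lemma expectS t (g : seq 'I_d -> R) :
  expect p t.+1 g = \sum_i p i * expect p t (fun s => g (i :: s)).
Proof.
rewrite /expect sum_tupleS; apply: eq_bigr => i _.
by rewrite mulr_sumr; apply: eq_bigr => s _; rewrite big_cons mulrA.
Qed.

Lemma expectD t (g1 g2 : seq 'I_d -> R) :
  expect p t (fun s => g1 s + g2 s) = expect p t g1 + expect p t g2.
Proof. by rewrite /expect -big_split; apply: eq_bigr => s _; rewrite mulrDr. Qed.

Lemma expectZ t c (g : seq 'I_d -> R) :
  expect p t (fun s => c * g s) = c * expect p t g.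
Proof. by rewrite /expect mulr_sumr; apply: eq_bigr => s _; rewrite mulrCA. Qed.

Hypothesis p_ge0 : forall i, 0 <= p i.

Lemma ler_expect t (g1 g2 : seq 'I_d -> R) :
  (forall s, g1 s <= g2 s) -> expect p t g1 <= expect p t g2.
Proof.
move=> g12; apply: ler_sum => s _; apply: ler_wpM2l => //.
exact: prodr_ge0.
Qed.

Hypothesis p_sum1 : \sum_i p i = 1.

Lemma expect_cst t c : expect p t (fun _ => c) = c.
Proof.
elim: t => [|t IH]; first by rewrite expect0.
by rewrite expectS; under eq_bigr do rewrite IH; rewrite -mulr_suml p_sum1 mul1r.
Qed.

End Expectation.

Section PseudoInverseProjector.
Variables (R : realType) (m d : nat) (A : 'M[R]_(m, d)) (Ad : 'M[R]_(d, m)).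
Hypothesis pinvA : is_pinv A Ad.

Local Notation P := (Ad *m A).

Lemma pinv_projT : P^T = P.
Proof. by case: pinvA. Qed.

Lemma pinv_proj_idem : P *m P = P.
Proof. by case: pinvA => _ AdAAd _ _; rewrite mulmxA AdAAd. Qed.

Lemma pinv_projC (i k : 'I_d) : P i k = P k i.
Proof. by rewrite -{1}pinv_projT mxE. Qed.

Lemma Rcoef_sum_sqr (i : 'I_d) : Rcoef Ad A i = \sum_k P k i ^+ 2.
Proof.
rewrite /Rcoef -{1}pinv_proj_idem mxE; apply: eq_bigr => k _.
by rewrite pinv_projC expr2.
Qed.

Lemma Rcoef_ge0 (i : 'I_d) : 0 <= Rcoef Ad A i.
Proof. by rewrite Rcoef_sum_sqr sumr_ge0 // => k _; apply: sqr_ge0. Qed.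

(* A unit diagonal entry of the orthogonal projector [P] forces the rest of its
   column to vanish, so [P] fixes the coordinate [i]. *)
Lemma Rcoef1_projE (i : 'I_d) (u : 'cV[R]_d) :
  Rcoef Ad A i = 1 -> (P *m u) i 0 = u i 0.
Proof.
move=> Ri1; have Pii : P i i = 1 by [].
have offdiag0 : forall k, k != i -> P k i = 0.
  have := Rcoef_sum_sqr i; rewrite (bigD1 i) //= Pii Ri1 expr1n => sum1.
  have /eqP : \sum_(k | k != i) P k i ^+ 2 = 0 by lra.
  rewrite psumr_eq0 => [/allP Pk0 k ki|k _]; last exact: sqr_ge0.
  by move: (Pk0 k (mem_index_enum k)); rewrite ki sqrf_eq0 => /eqP.
rewrite mxE (bigD1 i) //= Pii mul1r big1 ?addr0 // => k ki.
by rewrite pinv_projC offdiag0 ?mul0r.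
Qed.

Lemma trmx_mulP_sum (g u : 'cV[R]_d) :
  (g^T *m P *m u) 0 0 = \sum_k g k 0 * (P *m u) k 0.
Proof. by rewrite -mulmxA mxE; apply: eq_bigr => k _; rewrite mxE. Qed.

Lemma sqnormP_sum (u : 'cV[R]_d) : sqnormP Ad A u = \sum_k u k 0 * (P *m u) k 0.
Proof. exact: trmx_mulP_sum. Qed.

Lemma sqnormP_addZe (u : 'cV[R]_d) (dl : R) (j : 'I_d) :
  sqnormP Ad A (u + dl *: evec R j) =
  sqnormP Ad A u + 2 * dl * (P *m u) j 0 + dl ^+ 2 * Rcoef Ad A j.
Proof.
have Pe k : (P *m evec R j) k 0 = P k j.
  rewrite mxE (bigD1 j) //= big1 ?addr0 => [|l lj]; rewrite !mxE.
    by rewrite eqxx mulr1.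
  by rewrite (negbTE lj) mulr0.
have ue k : (u + dl *: evec R j) k 0 = u k 0 + dl * (k == j)%:R.
  by rewrite !mxE andbT.
have Pue k : (P *m (u + dl *: evec R j)) k 0 = (P *m u) k 0 + dl * P k j.
  by rewrite mulmxDr -scalemxAr mxE [in X in _ + X]mxE Pe.
have Pu_j : \sum_k u k 0 * P k j = (P *m u) j 0.
  by rewrite mxE; apply: eq_bigr => k _; rewrite mulrC pinv_projC.
rewrite !sqnormP_sum; under eq_bigr do rewrite ue Pue.
rewrite (bigD1 j) //= [in RHS](bigD1 j) //= eqxx.
have -> : \sum_(k | k != j) (u k 0 + dl * (k == j)%:R) * ((P *m u) k 0 + dl * P k j)
        = \sum_(k | k != j) u k 0 * (P *m u) k 0 + dl * \sum_(k | k != j) u k 0 * P k j.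
  rewrite mulr_sumr -big_split; apply: eq_bigr => k /negbTE ->.
  by rewrite /= mulr0 addr0 mulrDr mulrCA.
have -> : \sum_(k | k != j) u k 0 * P k j = (P *m u) j 0 - u j 0 * P j j.
  by rewrite -Pu_j [in RHS](bigD1 j) //= addrAC subrr add0r.
rewrite /Rcoef mulr1; ring.
Qed.

End PseudoInverseProjector.

Section Prox.
Variables (R : realType) (psi : R -> R).

Lemma is_prox_subgrad eta z w th :
  convex_fun psi -> 0 < eta -> is_prox psi eta z w ->
  psi w - psi th <= (th - w) * (w - z) / eta.
Proof.
move=> cvx eta_gt0 prox_w.
set D := psi w - psi th - (th - w) * (w - z) / eta.
set C := (th - w) ^+ 2 / (2 * eta).
have C_ge0 : 0 <= C by rewrite divr_ge0 ?sqr_ge0 // mulr_ge0 // ltW.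
(* compare [w] with the point [w + s (th - w)] of the segment towards [th] *)
have D_le s : 0 < s <= 1 -> D <= s * C.
  move=> /andP[s_gt0 s_le1].
  have := prox_w (s * th + (1 - s) * w).
  have := cvx th w s; rewrite (ltW s_gt0) s_le1 => /(_ isT) cvx_s.
  have -> : 1 / (2 * eta) * (s * th + (1 - s) * w - z) ^+ 2 =
            1 / (2 * eta) * (w - z) ^+ 2 + s * ((th - w) * (w - z) / eta + s * C).
    by rewrite /C; field; rewrite gt_eqF.
  move=> opt; rewrite -(ler_pM2l s_gt0) /D; lra.
rewrite -subr_le0 -/D; case: (lerP D 0) => // D_gt0.
have DC_gt0 : 0 < D + C by rewrite ltr_wpDr.
have := D_le (D / (D + C)).
rewrite divr_gt0 // ler_pdivrMr // mul1r lerDl C_ge0 => /(_ isT).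
rewrite mulrAC ler_pdivlMr //; nra.
Qed.

Lemma is_prox0 (eta z w : R) :
  0 < eta -> is_prox (fun _ => 0) eta z w -> w = z.
Proof.
move=> eta_gt0 /(_ z); rewrite subrr expr0n /= mulr0 !addr0 => le0.
have : 0 <= 1 / (2 * eta) * (w - z) ^+ 2 by rewrite mulr_ge0 ?sqr_ge0 // divr_ge0 // mulr_ge0 // ltW.
move=> ge0; have /eqP : 1 / (2 * eta) * (w - z) ^+ 2 = 0 by lra.
rewrite mulf_eq0 sqrf_eq0 subr_eq0 => /orP[|/eqP //].
by rewrite div1r invr_eq0 mulf_eq0 pnatr_eq0 /= gt_eqF.
Qed.

End Prox.

Section ConvexRepr.
Variables (R : realType) (psi : R -> R).
Hypothesis psi_cvx : convex_fun psi.

(* [h] plays the role of the estimate [hat psi] of [psi x]. *)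
Definition convex_repr (c x v h : R) : Prop :=
  exists lam u K, [/\ c <= lam <= 1, psi u <= K,
                      x = lam * v + (1 - lam) * u & h = lam * psi v + (1 - lam) * K].

Lemma convex_repr_psi_le c x v h : 0 <= c -> convex_repr c x v h -> psi x <= h.
Proof.
move=> c_ge0 [lam [u [K [/andP[c_lam lam_le1] psi_u -> ->]]]].
have lam_ge0 : 0 <= lam := le_trans c_ge0 c_lam.
have := @psi_cvx v u lam; rewrite lam_ge0 lam_le1 => /(_ isT) /le_trans; apply.
by rewrite lerD2l ler_wpM2l // subr_ge0.
Qed.

Lemma convex_repr_init c x : c <= 1 -> convex_repr c x x (psi x).
Proof. by move=> c_le1; exists 1, x, (psi x); split; rewrite ?c_le1 ?lexx //; ring. Qed.

Lemma convex_repr_anti c c' x v h : c' <= c -> convex_repr c x v h -> convex_repr c' x v h.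
Proof.
move=> c'c [lam [u [K [/andP[c_lam lam_le1] *]]]].
by exists lam, u, K; split=> //; rewrite (le_trans c'c c_lam).
Qed.

Lemma convex_repr_avg al c x v h : 0 <= al <= 1 -> convex_repr c x v h ->
  convex_repr c ((1 - al) * x + al * v) v ((1 - al) * h + al * psi v).
Proof.
move=> /andP[al_ge0 al_le1] [lam [u [K [/andP[c_lam lam_le1] psi_u -> ->]]]].
exists ((1 - al) * lam + al), u, K; split=> //; try ring.
by apply/andP; split; nra.
Qed.

Lemma convex_repr_jump al c x v h w : 0 <= al <= 1 -> c <= 1 -> convex_repr c x v h ->
  convex_repr c ((1 - al) * x + al * v + c * (w - v)) w
               ((1 - al) * h + al * psi v + c * (psi w - psi v)).
Proof.
move=> /andP[al_ge0 al_le1] c_le1 [lam [u [K [/andP[c_lam lam_le1] psi_u -> ->]]]].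
have [c1|c_lt1] := eqVneq c 1.
  have lam1 : lam = 1 by apply/eqP; rewrite eq_le lam_le1 -c1.
  by exists 1, w, (psi w); rewrite c1 lam1 lexx; split=> //; ring.
have c_lt1' : 0 < 1 - c by rewrite subr_gt0 lt_neqAle c_lt1.
(* the old [u] and [v] merge into a new [u] with weight [mu] *)
set mu := (1 - al) * (1 - lam) / (1 - c).
have mu_ge0 : 0 <= mu by rewrite divr_ge0 ?mulr_ge0 ?subr_ge0 // ltW.
have mu_le1 : mu <= 1 by rewrite ler_pdivrMr // mul1r; nra.
exists c, (mu * u + (1 - mu) * v), (mu * K + (1 - mu) * psi v); split.
- by rewrite lexx c_le1.
- have := @psi_cvx u v mu; rewrite mu_ge0 mu_le1 => /(_ isT) /le_trans; apply.
  by rewrite lerD2r ler_wpM2l.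
- by rewrite /mu; field; rewrite gt_eqF.
- by rewrite /mu; field; rewrite gt_eqF.
Qed.

End ConvexRepr.

Section StepSizes.
Variables (R : realType) (S : R) (a A_ alpha : nat -> R).
Hypotheses (A_S : forall t, A_ t.+1 = A_ t + a t.+1)
           (a_gt0 : forall t, 0 < a t.+1)
           (a_sqS : forall t, a t.+1 ^+ 2 * S ^+ 2 = A_ t.+1)
           (alphaE : forall t, alpha t = a t.+1 / A_ t.+1).

Lemma sqrS_gt0 : 0 < S ^+ 2.
Proof.
rewrite lt_def sqr_ge0 andbT sqrf_eq0; apply/eqP => S0.
have A0 t : A_ t.+1 = 0 by rewrite -a_sqS S0 expr0n mulr0.
by have := a_gt0 1; have := A_S 1; rewrite !A0 add0r => <-; rewrite ltxx.
Qed.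

Lemma alpha_invE t : alpha t = (a t.+1 * S ^+ 2)^-1.
Proof.
have S_neq0 : S != 0 by rewrite -sqrf_eq0 gt_eqF ?sqrS_gt0.
by rewrite alphaE -a_sqS; field; rewrite S_neq0 gt_eqF.
Qed.

Lemma alpha_gt0 t : 0 < alpha t.
Proof. by rewrite alpha_invE invr_gt0 mulr_gt0 // sqrS_gt0. Qed.

Lemma alpha_decr t : alpha t.+1 <= alpha t.
Proof.
have a_lt : a t.+1 < a t.+2.
  rewrite -(ltr_pXn2r (n := 2)) ?nnegrE ?ltW // -(ltr_pM2r sqrS_gt0) !a_sqS.
  by rewrite (A_S t.+1) ltrDl.
have aS_gt0 k : 0 < a k.+1 * S ^+ 2 by rewrite mulr_gt0 // sqrS_gt0.
rewrite !alpha_invE lef_pV2 ?posrE //.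
by rewrite ler_pM2r ?sqrS_gt0 // ltW.
Qed.

Lemma A_ge_A0 t : A_ 0 <= A_ t.
Proof.
elim: t => [//|t IH]; rewrite A_S; apply: le_trans IH _.
by rewrite lerDl ltW.
Qed.

Lemma alpha_le_of_A0 pR : 0 < pR -> A_ 0 = 3 / (S ^+ 2 * pR ^+ 2) ->
  forall t, alpha t <= pR.
Proof.
move=> pR_gt0 A0E t.
have S2_gt0 := sqrS_gt0.
have aS_gt0 : 0 < a t.+1 * S ^+ 2 by rewrite mulr_gt0.
have apS_gt0 : 0 < a t.+1 * S ^+ 2 * pR by rewrite mulr_gt0.
(* [(a S^2 pR)^2 = A_(t+1) S^2 pR^2 >= A_0 S^2 pR^2 = 3] *)
have apS_ge1 : 1 <= a t.+1 * S ^+ 2 * pR.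
  have sq_ge3 : 3 <= (a t.+1 * S ^+ 2 * pR) ^+ 2.
    have -> : (a t.+1 * S ^+ 2 * pR) ^+ 2 = A_ t.+1 * (S ^+ 2 * pR ^+ 2).
      by rewrite -a_sqS; ring.
    have S2pR2_gt0 : 0 < S ^+ 2 * pR ^+ 2 by rewrite mulr_gt0 // exprn_gt0.
    by rewrite -ler_pdivrMr // -A0E A_ge_A0.
  nra.
by rewrite alpha_invE -div1r ler_pdivrMr // mulrC.
Qed.

(* [q := 2 S^2 a_(t+1)] satisfies [4 S^2 A_(t+1) = q^2] and [4 S^2 A_t = q^2 - 2q],
   so [sqrt (4 S^2 A_t)] grows by at least one per step. *)
Lemma A_ge_sqr t : 0 <= A_ 0 -> t%:R ^+ 2 / (4 * S ^+ 2) <= A_ t.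
Proof.
move=> A0_ge0; have S4_gt0 : 0 < 4 * S ^+ 2 by rewrite mulr_gt0 ?sqrS_gt0.
elim: t => [|t IH]; first by rewrite expr0n /= mul0r.
rewrite ler_pdivrMr // in IH.
set q := 2 * S ^+ 2 * a t.+1.
have q_gt0 : 0 < q by rewrite mulr_gt0 ?(mulr_gt0 _ sqrS_gt0).
have A1E : A_ t.+1 * (4 * S ^+ 2) = q ^+ 2 by rewrite /q -a_sqS; ring.
have A0E : A_ t * (4 * S ^+ 2) = q ^+ 2 - 2 * q.
  by rewrite -A1E A_S /q; ring.
rewrite A0E in IH; rewrite ler_pdivrMr // A1E -natr1.
have t_ge0 : 0 <= t%:R :> R by [].
have q_ge : t%:R + 1 <= q.
  have [q_lt1|q_ge1] := ltrP q 1; first nra.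
  rewrite leNgt; apply/negP => q_lt; nra.
by rewrite ler_pXn2r // nnegrE; lra.
Qed.

End StepSizes.

Section MinRatio.
Variables (R : realType) (d : nat) (Rc p : 'I_d -> R) (pR : R).
Hypotheses (Rc_ge0 : forall i, 0 <= Rc i) (p_gt0 : forall i, 0 < p i) (pR_min : is_pR Rc p pR).

Lemma is_pR_gt0 : 0 < pR.
Proof. by case: pR_min => -[i Ri_gt0 ->] _; rewrite divr_gt0. Qed.

Lemma is_pR_ratio_le1 al i : al <= pR -> al * Rc i / p i <= 1.
Proof.
move=> al_le; have [Ri_gt0|Ri_le0] := ltrP 0 (Rc i).
  case: pR_min => _ /(_ i Ri_gt0) pR_le.
  by rewrite ler_pdivrMr // mul1r -ler_pdivlMr // (le_trans al_le).
suff -> : Rc i = 0 by rewrite mulr0 mul0r.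
by apply/le_anti; rewrite Ri_le0 Rc_ge0.
Qed.

End MinRatio.

Section APCGAnalysis.
Variables (R : realType) (m d : nat) (A : 'M[R]_(m, d)) (Ad : 'M[R]_(d, m))
  (fA : 'cV[R]_d -> R) (grad : 'cV[R]_d -> 'cV[R]_d)
  (psi : 'I_d -> R -> R) (prox : 'I_d -> R -> R -> R)
  (M p : 'I_d -> R) (S : R) (theta : 'cV[R]_d) (a A_ alpha : nat -> R).

Local Notation P := (Ad *m A).
Local Notation Rc := (Rcoef Ad A).
Local Notation e := (evec R).

Hypotheses
  (pinvA : is_pinv A Ad)
  (fA_cvx : forall x y, ((grad y)^T *m P *m (x - y)) 0 0 <= fA x - fA y)
  (fA_smooth : forall i x h,
     fA (x + h *: e i) <= fA x + h * grad x i 0 + M i / 2 * h ^+ 2)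
  (psi_cvx : forall i, convex_fun (psi i))
  (Rc1_or_psi0 : forall i, Rc i = 1 \/ psi i = (fun _ => 0))
  (proxP : forall i eta z, 0 < eta -> is_prox (psi i) eta z (prox i eta z))
  (p_gt0 : forall i, 0 < p i)
  (p_sum1 : \sum_i p i = 1)
  (M_le : forall i, M i * Rc i / p i ^+ 2 <= S ^+ 2)
  (A0_gt0 : 0 < A_ 0)
  (A_S : forall t, A_ t.+1 = A_ t + a t.+1)
  (a_gt0 : forall t, 0 < a t.+1)
  (a_sqS : forall t, a t.+1 ^+ 2 * S ^+ 2 = A_ t.+1)
  (alphaE : forall t, alpha t = a t.+1 / A_ t.+1)
  (gain_le1 : forall t i, alpha t * Rc i / p i <= 1).

Definition Fobj (x : 'cV[R]_d) := fA x + \sum_i psi i (x i 0).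

Definition gain t i := alpha t * Rc i / p i.

Definition eta t i := a t.+1 / p i.

Definition ycoup t (x v : 'cV[R]_d) := (1 - alpha t) *: x + alpha t *: v.

Definition wprox t i (x v : 'cV[R]_d) :=
  prox i (eta t i) (v i 0 - eta t i * grad (ycoup t x v) i 0).

Definition step t i xv :=
  apcg_step grad prox Rc p alpha (fun _ => 0) a (fun _ => 1) t i xv.

Lemma stepE t i x v :
  step t i (x, v) =
  (ycoup t x v + (gain t i * (wprox t i x v - v i 0)) *: e i,
   v + (wprox t i x v - v i 0) *: e i).
Proof.
rewrite /step /apcg_step /=.
rewrite mulr0 subr0 invr1 scale1r mulr1 mul1r scale1r scale0r addr0 -/(ycoup t x v).
have grad_iE (g : 'cV[R]_d) j : (grad_i (fun=> g) i 0) j 0 = (j == i)%:R * g i 0.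
  rewrite mxE (bigD1 i) //= big1 ?addr0 => [|k ki]; first by rewrite mxE eqxx andbT.
  by rewrite mxE (negbTE ki) andbF mul0r.
have -> : \col_j (if j == i then prox i (eta t i) ((v - eta t i *: grad_i grad i (ycoup t x v)) i 0)
                  else (v - eta t i *: grad_i grad i (ycoup t x v)) j 0)
          = v + (wprox t i x v - v i 0) *: e i.
  apply/matrixP => j k; rewrite ord1 !mxE.
  have := grad_iE (grad (ycoup t x v)) j; rewrite mxE => ->.
  have := grad_iE (grad (ycoup t x v)) i; rewrite mxE => ->.
  case: eqP => [->|_]; rewrite ?eqxx /= ?mul1r ?mul0r ?mulr0 ?subr0 ?addr0 //.
  by rewrite mulr1 addrCA subrr addr0.
by rewrite /gain subr0 (addrC v) addrK scalerA.
Qed.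

Lemma A_gt0 t : 0 < A_ t.
Proof. exact: lt_le_trans A0_gt0 (A_ge_A0 A_S a_gt0 t). Qed.

Lemma A_alpha t : A_ t.+1 * alpha t = a t.+1.
Proof. by rewrite alphaE mulrC divfK // gt_eqF // A_gt0. Qed.

Lemma A_1alpha t : A_ t.+1 * (1 - alpha t) = A_ t.
Proof. by rewrite mulrBr mulr1 A_alpha A_S addrK. Qed.

Lemma alpha_ge0 t : 0 <= alpha t.
Proof. exact/ltW/(alpha_gt0 A_S a_gt0 a_sqS alphaE). Qed.

Lemma alpha_le1 t : alpha t <= 1.
Proof.
have := A_1alpha t; have := A_gt0 t; have := A_gt0 t.+1.
rewrite -subr_ge0; nra.
Qed.

Lemma gain_ge0 t i : 0 <= gain t i.
Proof. by rewrite /gain !mulr_ge0 ?alpha_ge0 ?Rcoef_ge0 // invr_ge0 ltW. Qed.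

Lemma gain_decr t i : gain t.+1 i <= gain t i.
Proof.
rewrite /gain ler_pM2r ?invr_gt0 //.
rewrite ler_wpM2r ?Rcoef_ge0 //; exact: (alpha_decr A_S a_gt0 a_sqS alphaE).
Qed.

Local Notation state := (('cV[R]_d * 'cV[R]_d) * ('I_d -> R))%type.

(* The last component is the estimate [hat psi] of the separable part at [x].
   Like the [x]-update, its update is weighted by [gain t i]; this is harmless
   because [R_i = 1] whenever [psi_i] is not zero. *)
Definition aug_step t i (st : state) : state :=
  (step t i st.1,
   fun j => (1 - alpha t) * st.2 j + alpha t * psi j (st.1.2 j 0)
     + (if j == i then gain t i * (psi i ((step t i st.1).2 i 0) - psi i (st.1.2 i 0))
        else 0)).

Lemma aug_stepE t i x v h :
  let w := wprox t i x v in
  aug_step t i ((x, v), h) =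
  ((ycoup t x v + (gain t i * (w - v i 0)) *: e i, v + (w - v i 0) *: e i),
   fun j => (1 - alpha t) * h j + alpha t * psi j (v j 0)
     + (if j == i then gain t i * (psi i w - psi i (v i 0)) else 0)).
Proof.
rewrite /aug_step stepE /=; congr pair; apply: funext => j.
by rewrite !mxE eqxx mulr1 addrCA subrr addr0.
Qed.

Definition aug_run k (st : state) (s : seq 'I_d) : state :=
  (foldl (fun kst i => (kst.1.+1, aug_step kst.1 i kst.2)) (k, st) s).2.

Lemma aug_run_apcg (s : seq 'I_d) h :
  (aug_run 0 ((0, 0), h) s).1 = apcg_run grad prox Rc p alpha (fun _ => 0) a (fun _ => 1) s.
Proof.
rewrite /aug_run /apcg_run.
have proj k st : let r := foldl (fun kst i => (kst.1.+1, aug_step kst.1 i kst.2)) (k, st) s in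
    (r.1, r.2.1) = foldl (fun kst i => (kst.1.+1, step kst.1 i kst.2)) (k, st.1) s.
  by elim: s k st => [|i s IH] k st //=; rewrite IH.
by rewrite -(proj 0%N ((0, 0), h)).
Qed.

Definition repr_inv t (st : state) :=
  forall j, convex_repr (psi j) (gain t j) (st.1.1 j 0) (st.1.2 j 0) (st.2 j).

Lemma repr_inv_step t i st : repr_inv t st -> repr_inv t.+1 (aug_step t i st).
Proof.
case: st => [[x v] h] inv j; apply: convex_repr_anti (gain_decr t j) _.
have al01 : 0 <= alpha t <= 1 by rewrite alpha_ge0 alpha_le1.
rewrite aug_stepE /ycoup !mxE !andbT.
have [->|ji] := eqVneq j i.
  have := convex_repr_jump (psi_cvx i) (wprox t i x v) al01 (gain_le1 t i) (inv i).
  by rewrite /= -/(gain t i) (eqxx i) !mulr1 addrCA subrr addr0.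
rewrite /= (negbTE ji) !mulr0 !addr0.
exact: convex_repr_avg al01 (inv j).
Qed.

Lemma repr_inv_run k st s : repr_inv k st -> repr_inv (k + size s) (aug_run k st s).
Proof.
elim: s k st => [|i s IH] k st inv; first by rewrite addn0.
by rewrite /= -addSnnS; apply/IH/repr_inv_step.
Qed.

Definition lyap t (st : state) :=
  A_ t * (fA st.1.1 + \sum_j st.2 j - Fobj theta) + 1 / 2 * sqnormP Ad A (st.1.2 - theta).

Lemma Rcoef_psiE i y : Rc i * psi i y = psi i y.
Proof. by case: (Rc1_or_psi0 i) => ->; rewrite ?mul1r ?mulr0. Qed.

Lemma fA_three_point t x v :
  A_ t.+1 * fA (ycoup t x v) <= A_ t * fA x + a t.+1 * fA theta
    + a t.+1 * \sum_k grad (ycoup t x v) k 0 * (P *m (v - theta)) k 0.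
Proof.
set y := ycoup t x v; set G := (grad y)^T *m P.
have linZ c (u : 'cV[R]_d) : (G *m (c *: u)) 0 0 = c * (G *m u) 0 0.
  by rewrite -scalemxAr mxE.
have linD (u1 u2 : 'cV[R]_d) : (G *m (u1 + u2)) 0 0 = (G *m u1) 0 0 + (G *m u2) 0 0.
  by rewrite mulmxDr mxE.
(* [A_(t+1) y = A_t x + a_(t+1) v] *)
have comb : A_ t *: (x - y) + a t.+1 *: (theta - y) = (- a t.+1) *: (v - theta).
  apply/matrixP => k l; rewrite !mxE -(A_alpha t) -(A_1alpha t); ring.
have lin_comb : A_ t * (G *m (x - y)) 0 0 + a t.+1 * (G *m (theta - y)) 0 0
                = - (a t.+1 * (G *m (v - theta)) 0 0).
  by rewrite -!linZ -linD comb !linZ mulNr.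
have cvx_x : A_ t * (G *m (x - y)) 0 0 <= A_ t * (fA x - fA y).
  by rewrite ler_wpM2l ?fA_cvx // ltW ?A_gt0.
have cvx_th : a t.+1 * (G *m (theta - y)) 0 0 <= a t.+1 * (fA theta - fA y).
  by rewrite ler_wpM2l ?fA_cvx // ltW.
rewrite -trmx_mulP_sum -/G A_S; lra.
Qed.

Lemma fA_gain_step t i y dl :
  A_ t.+1 * p i * (fA (y + (gain t i * dl) *: e i) - fA y)
  <= a t.+1 * Rc i * dl * grad y i 0 + Rc i * p i * dl ^+ 2 / 2.
Proof.
have S2_gt0 := sqrS_gt0 A_S a_gt0 a_sqS.
have S_neq0 : S != 0 by rewrite -sqrf_eq0 gt_eqF.
have Ap_gt0 : 0 < A_ t.+1 * p i by rewrite mulr_gt0 ?A_gt0.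
set hh := gain t i * dl.
have lin_term : A_ t.+1 * p i * (hh * grad y i 0) = a t.+1 * Rc i * dl * grad y i 0.
  by rewrite /hh /gain alphaE; field; rewrite !gt_eqF ?A_gt0.
(* the step [hh] is tuned so that [S^2 >= M_i R_i / p_i^2] absorbs the curvature *)
have quad_term : A_ t.+1 * p i * (M i / 2 * hh ^+ 2)
                 = M i * Rc i / p i ^+ 2 / S ^+ 2 * (Rc i * p i * dl ^+ 2 / 2).
  by rewrite /hh /gain alphaE -a_sqS; field; rewrite S_neq0 !gt_eqF.
have ratio_le1 : M i * Rc i / p i ^+ 2 / S ^+ 2 <= 1 by rewrite ler_pdivrMr ?mul1r.
have quad_ge0 : 0 <= Rc i * p i * dl ^+ 2 / 2.
  by rewrite divr_ge0 // mulr_ge0 ?sqr_ge0 // mulr_ge0 ?Rcoef_ge0 // ltW.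
have := ler_piMl quad_ge0 ratio_le1; rewrite -quad_term => quad_le.
have : fA (y + hh *: e i) - fA y - hh * grad y i 0 - M i / 2 * hh ^+ 2 <= 0.
  by have := fA_smooth i y hh; lra.
rewrite -(pmulr_rle0 _ Ap_gt0) => smooth.
lra.
Qed.

Lemma prox_coord_ineq i (aa pp g vi th q w : R) : 0 < aa -> 0 < pp ->
  w = prox i (aa / pp) (vi - aa / pp * g) -> (Rc i = 1 -> q = w - th) ->
  (aa * g + pp * (w - vi)) * q + aa * Rc i * (psi i w - psi i th) <= 0.
Proof.
move=> aa_gt0 pp_gt0 wE qE; have eta_gt0 : 0 < aa / pp by rewrite divr_gt0.
set z := vi - aa / pp * g.
have -> : aa * g + pp * (w - vi) = pp * (w - z) by rewrite /z; field; rewrite gt_eqF.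
have prox_w : is_prox (psi i) (aa / pp) z w by rewrite wE; apply: proxP.
case: (Rc1_or_psi0 i) => [R1|psi0].
  have := is_prox_subgrad th (psi_cvx i) eta_gt0 prox_w.
  rewrite -(ler_pM2l aa_gt0) => subgrad.
  have rescale : aa * ((th - w) * (w - z) / (aa / pp)) = pp * ((th - w) * (w - z)).
    by field; rewrite !gt_eqF.
  rewrite rescale in subgrad.
  rewrite R1 mulr1 (qE R1); nra.
move: prox_w; rewrite psi0 => /(is_prox0 eta_gt0) ->.
by rewrite !subrr !mulr0 mul0r addr0.
Qed.

Lemma lyap_coord t i x v h :
  p i * lyap t.+1 (aug_step t i ((x, v), h)) <=
  p i * (A_ t.+1 * (fA (ycoup t x v) + (1 - alpha t) * \sum_j h j
                    + alpha t * \sum_j psi j (v j 0) - Fobj theta)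
         + 1 / 2 * sqnormP Ad A (v - theta))
  - a t.+1 * (grad (ycoup t x v) i 0 * (P *m (v - theta)) i 0
              + Rc i * (psi i (v i 0) - psi i (theta i 0))).
Proof.
rewrite aug_stepE /lyap /=.
set y := ycoup t x v; set w := wprox t i x v; set dl := w - v i 0.
set g : R := grad y i 0; set Q : R := (P *m (v - theta)) i 0.
have sum_h : \sum_j ((1 - alpha t) * h j + alpha t * psi j (v j 0)
                     + (if j == i then gain t i * (psi i w - psi i (v i 0)) else 0))
   = (1 - alpha t) * \sum_j h j + alpha t * \sum_j psi j (v j 0)
     + gain t i * (psi i w - psi i (v i 0)).
  by rewrite !big_split /= -!mulr_sumr -big_mkcond big_pred1_eq.
have sqn : sqnormP Ad A (v + dl *: e i - theta)
           = sqnormP Ad A (v - theta) + 2 * dl * Q + dl ^+ 2 * Rc i.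
  by rewrite addrAC sqnormP_addZe.
have smooth := fA_gain_step t i y dl; rewrite -/g in smooth.
have prox_ineq : (a t.+1 * g + p i * dl) * (Q + Rc i * dl)
                 + a t.+1 * Rc i * (psi i w - psi i (theta i 0)) <= 0.
  apply: prox_coord_ineq => // R1.
  by rewrite R1 mul1r /Q Rcoef1_projE // !mxE /dl; lra.
have gain_psi : p i * (A_ t.+1 * (gain t i * (psi i w - psi i (v i 0))))
                = a t.+1 * Rc i * (psi i w - psi i (v i 0)).
  by rewrite /gain alphaE; field; rewrite !gt_eqF ?A_gt0.
rewrite sum_h sqn; lra.
Qed.

Lemma lyap_step t st : \sum_i p i * lyap t.+1 (aug_step t i st) <= lyap t st.
Proof.
case: st => [[x v] h].
apply: le_trans (ler_sum _ (fun i _ => lyap_coord t i x v h)) _.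
rewrite sumrB -mulr_suml p_sum1 mul1r -mulr_sumr big_split /=.
have -> : \sum_i Rc i * (psi i (v i 0) - psi i (theta i 0))
          = \sum_i psi i (v i 0) - \sum_i psi i (theta i 0).
  by rewrite -sumrB; apply: eq_bigr => i _; rewrite mulrBr !Rcoef_psiE.
have := fA_three_point t x v; rewrite /lyap /Fobj /=.
set H := \sum_j h j; set Psv := \sum_j psi j (v j 0); set Pth := \sum_i psi i (theta i 0).
set Lin := \sum_i grad _ i 0 * _.
have eH : A_ t.+1 * ((1 - alpha t) * H) = A_ t * H by rewrite mulrA A_1alpha.
have eP : A_ t.+1 * (alpha t * Psv) = a t.+1 * Psv by rewrite mulrA A_alpha.
have efA : A_ t.+1 * fA theta = A_ t * fA theta + a t.+1 * fA theta by rewrite A_S mulrDl.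
have ePth : A_ t.+1 * Pth = A_ t * Pth + a t.+1 * Pth by rewrite A_S mulrDl.
lra.
Qed.

Lemma lyap_run n k st :
  expect p n (fun s => lyap (k + n) (aug_run k st s)) <= lyap k st.
Proof.
elim: n k st => [|n IH] k st; first by rewrite expect0 addn0.
rewrite expectS; apply: le_trans (lyap_step k st).
apply: ler_sum => i _; rewrite ler_pM2l // -addSnnS; exact: IH.
Qed.

Definition apcg_iter := apcg_run grad prox Rc p alpha (fun _ => 0) a (fun _ => 1).

Lemma gap_bound t :
  A_ t * (expect p t (fun s => Fobj (apcg_iter s).1) - Fobj theta)
  <= A_ 0 * (Fobj 0 - Fobj theta)
     + 1 / 2 * (sqnormP Ad A (0 - theta)
                - expect p t (fun s => sqnormP Ad A ((apcg_iter s).2 - theta))).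
Proof.
set st0 : state := ((0, 0), fun j => psi j ((0 : 'cV[R]_d) j 0)).
have iterE s : apcg_iter s = (aug_run 0 st0 s).1 by rewrite aug_run_apcg.
have psi_le s : \sum_j psi j ((aug_run 0 st0 s).1.1 j 0) <= \sum_j (aug_run 0 st0 s).2 j.
  have inv0 : repr_inv 0 st0 by move=> j; apply: convex_repr_init; exact: gain_le1.
  apply: ler_sum => j _.
  by have := convex_repr_psi_le (psi_cvx j) (gain_ge0 _ j) (repr_inv_run s inv0 j).
have lower s : A_ t * (Fobj (apcg_iter s).1 - Fobj theta) + 1 / 2 * sqnormP Ad A ((apcg_iter s).2 - theta)
                <= lyap t (aug_run 0 st0 s).
  rewrite iterE /lyap; apply: lerD => //; apply: ler_wpM2l; first exact/ltW/A_gt0.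
  by rewrite /Fobj lerD2r lerD2l psi_le.
have p_ge0 i : 0 <= p i by apply: ltW.
have := le_trans (ler_expect p_ge0 t lower) (lyap_run t 0 st0).
rewrite expectD !expectZ expectD (expect_cst p_sum1) /lyap /= -/(Fobj 0).
lra.
Qed.

Lemma gap_rate pR t : (forall x, Fobj theta <= Fobj x) -> 0 < pR ->
  A_ 0 = 3 / (S ^+ 2 * pR ^+ 2) -> (0 < t)%N ->
  expect p t (fun s => Fobj (apcg_iter s).1) - Fobj theta
  <= 2 / t%:R ^+ 2 *
     (S ^+ 2 * (sqnormP Ad A (0 - theta)
                - expect p t (fun s => sqnormP Ad A ((apcg_iter s).2 - theta)))
      + 6 / pR ^+ 2 * (Fobj 0 - Fobj theta)).
Proof.
move=> F_min pR_gt0 A0E t_gt0.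
set E := expect p t (fun s => Fobj _).
set r := sqnormP Ad A (0 - theta) - _.
have S2_gt0 := sqrS_gt0 A_S a_gt0 a_sqS.
have E_ge : Fobj theta <= E.
  rewrite -(expect_cst p_sum1 t (Fobj theta)).
  by apply: ler_expect => [i|s]; [exact: ltW | exact: F_min].
have c_gt0 : 0 < t%:R ^+ 2 / (4 * S ^+ 2) by rewrite divr_gt0 ?exprn_gt0 ?ltr0n // mulr_gt0.
have gap_t : t%:R ^+ 2 / (4 * S ^+ 2) * (E - Fobj theta)
             <= A_ 0 * (Fobj 0 - Fobj theta) + 1 / 2 * r.
  apply: le_trans _ (gap_bound t); rewrite ler_wpM2r ?subr_ge0 //.
  exact: A_ge_sqr A_S a_gt0 a_sqS t (ltW A0_gt0).
rewrite -(ler_pM2l c_gt0); apply: le_trans gap_t _; rewrite A0E le_eqVlt; apply/orP; left.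
by apply/eqP; field; rewrite gt_eqF // pnatr_eq0 -lt0n t_gt0 -sqrf_eq0 gt_eqF.
Qed.

End APCGAnalysis.

Theorem corollary2 (R : realType) (m d : nat)
  (A : 'M[R]_(m, d)) (Ad : 'M[R]_(d, m))
  (fA : 'cV[R]_d -> R) (grad : 'cV[R]_d -> 'cV[R]_d)
  (psi : 'I_d -> R -> R) (prox : 'I_d -> R -> R -> R)
  (M p : 'I_d -> R) (sigmaA S pR : R) (theta : 'cV[R]_d)
  (a A_ B alpha beta : nat -> R) :
  is_pinv A Ad ->
  (forall x, differentiable fA x) ->
  (forall x h, 'd fA x h = \sum_j grad x j 0 * h j 0) ->
  (forall x y, fA x - fA y >= ((grad y)^T *m (Ad *m A) *m (x - y)) 0 0
                               + sigmaA / 2 * sqnormP Ad A (x - y)) ->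
  (forall (i : 'I_d) x (h : R), fA (x + h *: @evec R d i) <=
                       fA x + h * grad x i 0 + M i / 2 * h ^+ 2) ->
  (forall i, convex_fun (psi i)) ->
  (forall i, Rcoef Ad A i = 1 \/ psi i = (fun _ => 0)) ->
  (forall i eta z, 0 < eta -> is_prox (psi i) eta z (prox i eta z)) ->
  (forall i, 0 < p i) -> \sum_i p i = 1 ->
  let F := fun x : 'cV[R]_d => fA x + \sum_i psi i (x i 0) in
  (forall x, F theta <= F x) ->
  sigmaA = 0 ->
  (forall i, M i * Rcoef Ad A i / p i ^+ 2 <= S ^+ 2) ->
  (forall t, beta t = 0) ->
  (forall t, B t = 1) ->
  is_pR (Rcoef Ad A) p pR ->
  A_ 0%N = 3 * B 0%N / (S ^+ 2 * pR ^+ 2) ->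
  (forall t, A_ t.+1 = A_ t + a t.+1) ->
  (forall t, 0 < a t.+1) ->
  (forall t, a t.+1 ^+ 2 * S ^+ 2 = A_ t.+1 * B 0%N) ->
  (forall t, alpha t = a t.+1 / A_ t.+1) ->
  let run := apcg_run grad prox (Rcoef Ad A) p alpha beta a B in
  (forall i t, 0 <= 1 - beta t - alpha t * Rcoef Ad A i / p i) /\
  (forall t : nat, (0 < t)%N ->
     let rt2 := sqnormP Ad A (0 - theta)
                - expect p t (fun s => sqnormP Ad A ((run s).2 - theta)) in
     expect p t (fun s => F (run s).1) - F theta
     <= 2 / (t%:R ^+ 2) *
          (S ^+ 2 * rt2 + 6 / pR ^+ 2 * (F 0 - F theta))).
Proof.
move=> pinvA _ _ fA_cvx0 fA_smooth psi_cvx Rc1_or_psi0 proxP p_gt0 p_sum1 F F_min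
  sigma0 M_le beta0 B1 pR_min A0E A_S a_gt0 a_sqS1 alphaE run.
have beta_0 : beta = fun _ => 0 by apply: funext.
have B_1 : B = fun _ => 1 by apply: funext.
subst beta B.
have a_sqS t : a t.+1 ^+ 2 * S ^+ 2 = A_ t.+1 by rewrite a_sqS1 mulr1.
have fA_cvx x y : ((grad y)^T *m (Ad *m A) *m (x - y)) 0 0 <= fA x - fA y.
  by have := fA_cvx0 x y; rewrite sigma0 !mul0r addr0.
have pR_gt0 := is_pR_gt0 p_gt0 pR_min.
have {A0E}A0E : A_ 0 = 3 / (S ^+ 2 * pR ^+ 2) by rewrite A0E mulr1.
have alpha_le_pR := alpha_le_of_A0 A_S a_gt0 a_sqS alphaE pR_gt0 A0E.
have gain_le1 t i : alpha t * Rcoef Ad A i / p i <= 1.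
  exact: is_pR_ratio_le1 (Rcoef_ge0 pinvA) p_gt0 pR_min _ _ (alpha_le_pR t).
split=> [i t|t t_gt0]; first by rewrite subr0 subr_ge0.
have A0_gt0 : 0 < A_ 0.
  by rewrite A0E divr_gt0 // mulr_gt0 ?(sqrS_gt0 A_S a_gt0 a_sqS) // exprn_gt0.
by have := gap_rate pinvA fA_cvx fA_smooth psi_cvx Rc1_or_psi0 proxP p_gt0 p_sum1
  M_le A0_gt0 A_S a_gt0 a_sqS alphaE gain_le1 F_min pR_gt0 A0E t_gt0.
Qed.
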